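(* Let $q\ge2$ be an even integer. For integers $1\le c_1,c_2,c_3,c_4\le q/2$, define $$f(c_1,c_2,c_3,c_4)=\delta_{c_1,c_2}\delta_{c_3,c_4}-\#\big\{\,|q+1-2|x||\ :\ x\in\{c_1+c_2,\ c_3+c_4,\ c_1-c_2,\ c_3-c_4\}\big\}.$$ Then $f$ is invariant under every permutation of its four arguments.
   Context: $\#S$ denotes the cardinality of a set $S$, and $\delta$ is the Kronecker delta. *)

From mathcomp Require Import all_boot all_order all_algebra all_fingroup.
Set Implicit Arguments. Unset Strict Implicit. Unset Printing Implicit Defensive.
Import Order.TTheory GRing.Theory Num.Theory.
Local Open Scope ring_scope.

Definition gq (q : nat) (x : int) : int := `|(q%:Z + 1 - 2 * `|x|)|.

Definition fq (q : nat) (c1 c2 c3 c4 : int) : int :=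
  ((c1 == c2) && (c3 == c4))%:Z
  - (size (undup [:: gq q (c1 + c2); gq q (c3 + c4);
                     gq q (c1 - c2); gq q (c3 - c4)]))%:Z.

From mathcomp Require Import all_boot all_order all_algebra all_fingroup.
From mathcomp Require Import zify ring.
Set Implicit Arguments. Unset Strict Implicit. Unset Printing Implicit Defensive.
Import Order.TTheory GRing.Theory Num.Theory.
Local Open Scope ring_scope.

(* Put N = q + 1, which is odd.  For |x|, |y| <= q we have g x = g y iff x + y
   or x - y lies in {0, N, -N}, and both happen only for x = y = 0.  Among the
   values g(c1+c2), g(c3+c4), g(c1-c2), g(c3-c4) the first and third always
   differ, as do the second and fourth, so the number of distinct values is 4
   minus the number of coincidences along the 4-cycle they form.  Expanding
   each coincidence gives f = #{e in {1,-1}^3 | c1 + e1 c2 + e2 c3 + e3 c4 is in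
   {0, N, -N}} - 4, the Kronecker term cancelling the one coincidence
   (c1 - c2 = c3 - c4 = 0) that is counted twice.  The condition being even,
   this count is half the same count over all sign vectors of {1,-1}^4, which
   is visibly invariant under permuting c1, ..., c4. *)

Section SignedSums.

Variables (V : zmodType) (P : pred V).

Fixpoint nsigned (z : V) (s : seq V) : nat :=
  if s is x :: s' then (nsigned (z + x) s' + nsigned (z - x) s')%N else P z.

Lemma nsigned_swap z x y s : nsigned z [:: x, y & s] = nsigned z [:: y, x & s].
Proof.
by rewrite /= (addrAC z y x) (addrAC z y (- x)) (addrAC z (- y) x)
  (addrAC z (- y) (- x)) addnACA.
Qed.

Lemma nsigned_move z x s t : nsigned z (s ++ x :: t) = nsigned z (x :: s ++ t).
Proof.
elim: s z => [|y s IHs] z //=.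
by rewrite !IHs -[in RHS]/(nsigned z [:: x, y & s ++ t]) nsigned_swap.
Qed.

Lemma nsigned_catCA z s1 s2 s3 :
  nsigned z (s1 ++ s2 ++ s3) = nsigned z (s2 ++ s1 ++ s3).
Proof.
elim: s1 z => [|x s1 IHs] z //=.
by rewrite !IHs nsigned_move.
Qed.

Lemma perm_nsigned z s t : perm_eq s t -> nsigned z s = nsigned z t.
Proof. exact: (catCA_perm_subst (nsigned_catCA z)). Qed.

Hypothesis P_even : forall z, P (- z) = P z.

Lemma nsignedN z s : nsigned (- z) s = nsigned z s.
Proof.
elim: s z => [|x s IHs] z /=; first by rewrite P_even.
by rewrite -opprD (addrC (- z)) -opprB !IHs addnC.
Qed.

Lemma nsigned0_cons x s : nsigned 0 (x :: s) = (nsigned x s).*2.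
Proof. by rewrite /= add0r sub0r nsignedN addnn. Qed.

End SignedSums.

Lemma perm_map_perm_enum (T : finType) (s : {perm T}) :
  perm_eq (map s (enum T)) (enum T).
Proof.
apply: uniq_perm; rewrite ?(map_inj_uniq perm_inj) ?enum_uniq // => x.
by rewrite -{1}(permKV s x) (mem_map perm_inj) !mem_enum.
Qed.

Lemma size_undup_cycle4 (T : eqType) (x1 x2 x3 x4 : T) : x1 != x3 -> x2 != x4 ->
  (size (undup [:: x1; x2; x3; x4]))%:Z
  = 4 - (x1 == x2)%:Z - (x3 == x2)%:Z - (x3 == x4)%:Z - (x1 == x4)%:Z.
Proof. by rewrite /= !inE; do ![case: eqP => [?|?] //=; subst]. Qed.

Definition critical (q : nat) (z : int) : bool := (z == 0) || (`|z| == q%:Z + 1).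

Lemma criticalN q z : critical q (- z) = critical q z.
Proof. by rewrite /critical oppr_eq0 normrN. Qed.

Lemma eq_gq q x y : `|x| <= q%:Z -> `|y| <= q%:Z ->
  (gq q x == gq q y) = critical q (x + y) || critical q (x - y).
Proof. by rewrite /gq /critical; lia. Qed.

Lemma critical_add_sub q x y : ~~ odd q -> `|x| <= q%:Z -> `|y| <= q%:Z ->
  critical q (x + y) && critical q (x - y) = (x == 0) && (y == 0).
Proof. by rewrite /critical; lia. Qed.

Lemma eq_gqE q x y : ~~ odd q -> `|x| <= q%:Z -> `|y| <= q%:Z ->
  (gq q x == gq q y)%:Z
  = (critical q (x + y))%:Z + (critical q (x - y))%:Z - ((x == 0) && (y == 0))%:Z.
Proof.
move=> q_even lex ley; rewrite eq_gq // -(critical_add_sub q_even lex ley).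
by case: critical; case: critical.
Qed.

Lemma fq_nsigned q a b c d : ~~ odd q ->
  1 <= a <= (q./2)%:Z -> 1 <= b <= (q./2)%:Z ->
  1 <= c <= (q./2)%:Z -> 1 <= d <= (q./2)%:Z ->
  fq q a b c d = (nsigned (critical q) a [:: b; c; d])%:Z - 4.
Proof.
move=> q_even ha hb hc hd.
have le_q x y : 1 <= x <= (q./2)%:Z -> 1 <= y <= (q./2)%:Z ->
    `|x + y| <= q%:Z /\ `|x - y| <= q%:Z by move=> hx hy; split; lia.
have gq_neq x y : 1 <= x <= (q./2)%:Z -> 1 <= y <= (q./2)%:Z ->
    gq q (x + y) != gq q (x - y) by move=> hx hy; rewrite /gq; lia.
have [abD abB] := le_q a b ha hb; have [cdD cdB] := le_q c d hc hd.
have [ab_neq0 cd_neq0] : (a + b == 0) = false /\ (c + d == 0) = false by split; lia.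
rewrite /fq size_undup_cycle4 ?gq_neq // !eq_gqE // ab_neq0 cd_neq0 !subr_eq0 !andbF /=.
by rewrite !opprD !opprK !addrA !PoszD; ring.
Qed.
Lemma enum_ord4 : enum 'I_4 = [:: inord 0; inord 1; inord 2; inord 3].
Proof. by apply: (inj_map val_inj); rewrite val_enum_ord /= !inordK. Qed.

Theorem corollary4p4 (q : nat) (hq2 : (2 <= q)%N) (hqe : ~~ odd q)
  (c : 'I_4 -> int)
  (hc : forall i : 'I_4, 1 <= c i <= (q./2)%:Z)
  (s : {perm 'I_4}) :
  fq q (c (s (inord 0))) (c (s (inord 1))) (c (s (inord 2))) (c (s (inord 3)))
  = fq q (c (inord 0)) (c (inord 1)) (c (inord 2)) (c (inord 3)).
Proof.
rewrite !fq_nsigned ?hc //; congr (Posz _ - 4).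
apply: double_inj; rewrite -!(nsigned0_cons (criticalN q)).
apply: perm_nsigned.
by have := perm_map c (perm_map_perm_enum s); rewrite -map_comp enum_ord4.
Qed.
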